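(* Let $\alpha\in\{0,1\}$ and $u\geqslant1$ be integers. There exists a set $\mathfrak{A}$ of $u$ integer $3\times3$ matrices such that the multiset of absolute values of all entries of all matrices in $\mathfrak{A}$ is exactly the set $$\begin{aligned}&[4\alpha+9,2u+4\alpha+7]_2\cup[2u+4\alpha+8,3u+4\alpha+7]\cup[3u+8\alpha+16,5u+8\alpha+15]\cup[5u+12\alpha+24,6u+12\alpha+23]\\ &\cup[6u+12\alpha+25,8u+12\alpha+23]_2\cup[9u+16\alpha+32,10u+16\alpha+31]\cup[11u+20\alpha+40,12u+20\alpha+39]\\&\cup[14u+28\alpha+56,16u+28\alpha+54]_2\end{aligned}$$ (each element occurring once), and $\sigma_r(A)=\sigma_c(A)=(0,0,0)$ for every $A\in\mathfrak{A}$.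
   Context: For integers $a\equiv b\pmod d$ with $d\geqslant1$, $[a,b]_d=\{a+id: 0\leqslant i\leqslant (b-a)/d\}$ if $a\leqslant b$ and $[a,b]_d=\varnothing$ if $a>b$; $[a,b]=[a,b]_1$. For a matrix $A$, $\sigma_r(A)$ is the sequence of its row sums and $\sigma_c(A)$ the sequence of its column sums. *)

From mathcomp Require Import all_boot all_order all_algebra.
Set Implicit Arguments. Unset Strict Implicit. Unset Printing Implicit Defensive.
Import GRing.Theory Num.Theory.

(* [a,b]_d = {a + i d : 0 <= i <= (b-a)/d} if a <= b, empty otherwise
   (all endpoints in the statement are positive naturals). *)
Definition step_int (a b d : nat) : seq nat :=
  if a <= b then [seq a + i * d | i <- iota 0 ((b - a) %/ d).+1] else [::].

Definition nat_int (a b : nat) : seq nat := step_int a b 1.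

Definition target (al u : nat) : seq nat :=
  step_int (4*al+9) (2*u+4*al+7) 2
  ++ nat_int (2*u+4*al+8) (3*u+4*al+7)
  ++ nat_int (3*u+8*al+16) (5*u+8*al+15)
  ++ nat_int (5*u+12*al+24) (6*u+12*al+23)
  ++ step_int (6*u+12*al+25) (8*u+12*al+23) 2
  ++ nat_int (9*u+16*al+32) (10*u+16*al+31)
  ++ nat_int (11*u+20*al+40) (12*u+20*al+39)
  ++ step_int (14*u+28*al+56) (16*u+28*al+54) 2.

Definition abs_entries (A : 'M[int]_3) : seq nat :=
  [seq absz (A i j) | i <- enum 'I_3, j <- enum 'I_3].

Definition zero_line_sums (A : 'M[int]_3) : Prop :=
  (forall i : 'I_3, (\sum_(j < 3) A i j)%R = 0%R) /\
  (forall j : 'I_3, (\sum_(i < 3) A i j)%R = 0%R).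

(* Up to sign, every entry of the i-th matrix (0 <= i < u) is the i-th or the
   (u-1-i)-th term of an arithmetic progression of length u, so as i runs over [0, u)
   each of the nine positions sweeps such a progression: seven positions sweep seven
   of the eight target intervals, and positions (0,2) and (2,0) sweep the two halves
   of [3u+8α+16, 5u+8α+15].  The signs make all row and column sums vanish
   identically in i. *)

From mathcomp Require Import all_boot all_order all_algebra zify.
Import GRing.Theory.

Lemma perm_flatten_transpose {S : Type} {T : eqType} (fs : seq (S -> T)) (r : seq S) :
  perm_eq (flatten [seq [seq f x | f <- fs] | x <- r])
          (flatten [seq [seq f x | x <- r] | f <- fs]).
Proof.
apply/permP => p; rewrite !count_flatten !sumnE !big_map.
under eq_bigr do rewrite count_map -sumn_count sumnE big_map.
under [RHS]eq_bigr do rewrite count_map -sumn_count sumnE big_map.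
exact: exchange_big.
Qed.

Lemma rev_iota0 n : rev (iota 0 n) = [seq n.-1 - i | i <- iota 0 n].
Proof.
apply: (@eq_from_nth _ 0); first by rewrite size_rev size_map.
move=> k; rewrite size_rev size_iota => lt_kn.
by rewrite nth_rev ?size_iota // (nth_map 0) ?size_iota // !nth_iota //; lia.
Qed.

Definition prog_term (a d i : nat) : nat := a + i * d.

Definition arith_prog (a d n : nat) : seq nat := map (prog_term a d) (iota 0 n).

Lemma step_int_arith_prog a b d n : 0 < d -> 0 < n -> b = a + n.-1 * d ->
  step_int a b d = arith_prog a d n.
Proof. by move=> d_gt0 n_gt0 ->; rewrite /step_int leq_addr addKn mulnK // prednK. Qed.

Lemma arith_progD a d m n :
  arith_prog a d (m + n) = arith_prog a d m ++ arith_prog (a + m * d) d n.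
Proof.
rewrite /arith_prog iotaD map_cat add0n; congr (_ ++ _).
rewrite -[in LHS](addn0 m) iotaDl -map_comp.
by apply: eq_map => i; rewrite /= /prog_term mulnDl addnA.
Qed.

Lemma map_rev_arith_prog a d n :
  [seq prog_term a d (n.-1 - i) | i <- iota 0 n] = rev (arith_prog a d n).
Proof. by rewrite /arith_prog -map_rev rev_iota0 -map_comp. Qed.

Definition block_magnitudes (al u : nat) : seq (nat -> nat) :=
  [:: prog_term (4*al+9) 2;   fun i => prog_term (2*u+4*al+8) 1 (u.-1 - i);
        prog_term (3*u+8*al+16) 1;
      prog_term (5*u+12*al+24) 1;   prog_term (9*u+16*al+32) 1;
        prog_term (14*u+28*al+56) 2;
      fun i => prog_term (4*u+8*al+16) 1 (u.-1 - i);   prog_term (6*u+12*al+25) 2;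
        prog_term (11*u+20*al+40) 1].

Definition block_signs : seq int := [:: 1; 1; -1; -1; -1; 1; 1; 1; -1]%R.

Definition block (al u i : nat) : 'M[int]_3 :=
  \matrix_(r < 3, k < 3)
    (block_signs`_(3 * r + k)
     * (nth (fun=> 0) (block_magnitudes al u) (3 * r + k) i)%:Z)%R.

Lemma abs_entries_block al u i :
  abs_entries (block al u i) = [seq f i | f <- block_magnitudes al u].
Proof.
rewrite /abs_entries; have -> : enum 'I_3 = [:: ord0; inord 1; inord 2].
  by apply: (inj_map val_inj); rewrite val_enum_ord /= !inordK.
by rewrite /= !mxE /= !inordK //= !mul1n !mulN1r !abszN.
Qed.

Lemma block_zero_line_sums al u i : i < u -> zero_line_sums (block al u i).
Proof.
move=> lt_iu; split=> -[[|[|[|//]]] ?];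
  rewrite !big_ord_recr big_ord0 /= !mxE /= /prog_term; lia.
Qed.

Lemma block_inj al u : injective (block al u).
Proof. by move=> i j /matrixP /(_ ord0 ord0); rewrite !mxE /= /prog_term; lia. Qed.

Lemma perm_block_magnitudes_target al u : 0 < u ->
  perm_eq (flatten [seq [seq f i | i <- iota 0 u] | f <- block_magnitudes al u])
          (target al u).
Proof.
move=> u_gt0; rewrite /= !map_rev_arith_prog -!/(arith_prog _ _ u).
rewrite /target /nat_int (@step_int_arith_prog (3*u+8*al+16) _ _ (u + u));
  rewrite ?addn_gt0 ?u_gt0 //; last lia.
rewrite !(@step_int_arith_prog _ _ _ u) //; try lia.
rewrite arith_progD (_ : 3*u+8*al+16 + u*1 = 4*u+8*al+16); last lia.
by apply/permP => p; rewrite !count_cat !count_rev /=; lia.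
Qed.

Theorem lemma2p3 (al u : nat) (hal : al <= 1) (hu : 1 <= u) :
  exists s : seq 'M[int]_3,
    [/\ size s = u, uniq s,
        perm_eq (flatten [seq abs_entries A | A <- s]) (target al u)
      & forall A, A \in s -> zero_line_sums A].
Proof.
exists [seq block al u i | i <- iota 0 u]; split.
- by rewrite size_map size_iota.
- by rewrite (map_inj_uniq (@block_inj al u)) iota_uniq.
- rewrite -map_comp (eq_map (@abs_entries_block al u)).
  apply: perm_trans (perm_flatten_transpose _ _) _.
  exact: perm_block_magnitudes_target.
- move=> A /mapP [i]; rewrite mem_iota => /andP [_ lt_iu] ->.
  exact: block_zero_line_sums.
Qed.
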